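(* Let $\Psi$ be an $n\times n$ complex matrix whose spectrum lies in the open unit disk $\mathcal{D}$. Let $B$ be a Blaschke product of degree at most $n-1$ that maximizes $\|\hat B(\Psi)\|$ over all Blaschke products $\hat B$ of degree at most $n-1$, and assume $\|B(\Psi)\|>1$. If $v_1$ is a right singular vector of $B(\Psi)$ corresponding to the largest singular value $\sigma_1$, then $\langle B(\Psi)v_1,v_1\rangle=0$.
   Context: A Blaschke product of degree at most $n-1$ is a function $B(z)=e^{i\theta}\prod_{j=1}^{n-1}\frac{z-\alpha_j}{1-\bar\alpha_j z}$ with $\theta\in\mathbb{R}$ and $|\alpha_j|\le 1$ (factors with $|\alpha_j|=1$ are interpreted as the corresponding unimodular constants, so the degree may be less than $n-1$). $\|\cdot\|$ is the matrix 2-norm and $\langle\cdot,\cdot\rangle$ the standard inner product on $\mathbb{C}^n$. *)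

From HB Require Import structures.
From mathcomp Require Import all_boot all_order all_algebra.
From mathcomp Require Import complex.
From mathcomp Require Import classical_sets reals.
Set Implicit Arguments. Unset Strict Implicit. Unset Printing Implicit Defensive.
Import Order.TTheory GRing.Theory Num.Theory.
Local Open Scope ring_scope.
Local Open Scope classical_set_scope.

Section Defs.
Variable R : realType.
Local Notation C := R[i].

Definition cabs (z : C) : R := Normc.normc z.

Definition vnorm n (x : 'cV[C]_n) : R :=
  Num.sqrt (\sum_(i < n) cabs (x i 0) ^+ 2).

Definition cinner n (x y : 'cV[C]_n) : C :=
  \sum_(i < n) x i 0 * conjc (y i 0).

Definition adjmx m n (A : 'M[C]_(m, n)) : 'M[C]_(n, m) := map_mx conjc A^T.

Definition mxnorm2 n (A : 'M[C]_n) : R :=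
  sup [set vnorm (A *m x) | x in [set x : 'cV[C]_n | vnorm x = 1]].

(* one Blaschke factor (z - a)/(1 - conj(a) z) evaluated at the matrix Psi;
   when |a| = 1 the factor is the unimodular constant -a *)
Definition blaschke_factor_mx n (a : C) (Psi : 'M[C]_n) : 'M[C]_n :=
  if cabs a == 1 then (- a)%:M
  else (Psi - a%:M) *m invmx (1%:M - conjc a *: Psi).

Definition blaschke_mx n k (c : C) (a : 'I_k -> C) (Psi : 'M[C]_n) : 'M[C]_n :=
  c *: \big[mulmx/1%:M]_(j < k) blaschke_factor_mx (a j) Psi.

Definition blaschke_params k (c : C) (a : 'I_k -> C) : Prop :=
  cabs c = 1 /\ forall j, cabs (a j) <= 1.

End Defs.

(* Write a Blaschke product of degree at most n - 1 as B = c P / Q, where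
   P = prod (z - a_j) and Q = prod (1 - conj a_j z) is the reciprocal of P.  For |t| < 1 the
   numerator c P - t Q of (B - t) / (1 - conj t B) has all its roots in the closed unit disk
   and its reciprocal is, up to a constant, the matching denominator, so this Moebius image
   of B is again a Blaschke product of degree at most n - 1.  By maximality,
   Phi := (B(Psi) - t) (I - conj t B(Psi))^-1 satisfies ||Phi|| <= s := ||B(Psi)||.
   Apply this to w := (I - conj t B(Psi)) v1 with t := e p, p := <B(Psi) v1, v1>, e > 0:
   since B(Psi)^* B(Psi) v1 = s^2 v1,
     ||Phi w||^2 - s^2 ||w||^2 = e |p|^2 (s^2 - 1) (2 - e ||v1||^2 (s^2 + 1)),
   which is positive for small e unless p = 0. *)

From HB Require Import structures.
From mathcomp Require Import all_boot all_order all_algebra.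
From mathcomp Require Import complex.
From mathcomp Require Import classical_sets reals.
From mathcomp Require Import ring lra zify.
Import Order.TTheory GRing.Theory Num.Theory.
Local Open Scope ring_scope.

Set Implicit Arguments. Unset Strict Implicit. Unset Printing Implicit Defensive.

Section Reciprocal.
Variable C : numClosedFieldType.
Implicit Types (p q : {poly C}) (k : C).

(* For [size p <= m.+1], [recip m p] is z^m * conj (p (1 / conj z)). *)
Definition recip (m : nat) p : {poly C} := \poly_(i < m.+1) (p`_(m - i))^*.

Lemma recipB m p q : recip m (p - q) = recip m p - recip m q.
Proof.
apply/polyP => i; rewrite coefB !coef_poly.
by case: ifP => _; rewrite ?subr0 // coefB rmorphB.
Qed.

Lemma recipZ m k p : recip m (k *: p) = k^* *: recip m p.
Proof.
apply/polyP => i; rewrite coefZ !coef_poly.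
by case: ifP => _; rewrite ?mulr0 // coefZ rmorphM.
Qed.

Lemma recip_mulX m p : (size p <= m.+1)%N -> recip m.+1 ('X * p) = recip m p.
Proof.
move=> sp; apply/polyP => i; rewrite !coef_poly coefXM.
have [lt_im|le_mi] := ltnP i m.+1.
  by rewrite ifT ?ifN; [congr (_^*); congr (p`_ _)|apply/eqP|]; lia.
case: ifP => // _; rewrite (_ : m.+1 - i = 0)%N ?conjC0 //; lia.
Qed.

Lemma recipS m p : (size p <= m.+1)%N -> recip m.+1 p = 'X * recip m p.
Proof.
move=> sp; apply/polyP => -[|i]; rewrite coefXM !coef_poly //=.
by rewrite subn0 nth_default ?conjC0.
Qed.

Lemma recipK m p : (size p <= m.+1)%N -> recip m (recip m p) = p.
Proof.
move=> sp; apply/polyP => i; rewrite !coef_poly.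
have [lt_im|le_mi] := ltnP i m.+1; last by rewrite nth_default // (leq_trans sp).
by rewrite ifT ?conjCK; [congr (p`_ _)|]; lia.
Qed.

Lemma recip_prod_XsubC I (r : seq I) (F : I -> C) :
  recip (size r) (\prod_(i <- r) ('X - (F i)%:P)) =
  \prod_(i <- r) (1 - (F i)^* *: 'X).
Proof.
elim: r => [|x r IHr].
  rewrite !big_nil; apply/polyP => -[|i]; rewrite coef_poly coef1 //=.
  - exact: conjC1.
  - by rewrite coef1.
have sr := eq_leq (size_prod_XsubC r F).
rewrite !big_cons /= -IHr mulrBl mul_polyC recipB recip_mulX // recipZ recipS //.
by rewrite mulrBl mul1r scalerAl.
Qed.

End Reciprocal.

Section BlaschkePoly.
Variable C : numClosedFieldType.

Lemma norm_1subJM_le (a z : C) : `|a| <= 1 -> 1 <= `|z| ->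
  `|1 - a^* * z| <= `|z - a|.
Proof.
move=> a_le1 z_ge1.
rewrite -(ler_pXn2r (_ : 0 < 2)%N) ?nnegrE // -subr_ge0.
have -> : `|z - a| ^+ 2 - `|1 - a^* * z| ^+ 2 = (`|z| ^+ 2 - 1) * (1 - `|a| ^+ 2).
  by rewrite !normCK !rmorphB !rmorphM rmorph1 /= conjCK; ring.
by rewrite mulr_ge0 // subr_ge0 ?exprn_ege1 ?exprn_ile1.
Qed.

Definition blaschke_num k (a : 'I_k -> C) : {poly C} :=
  \prod_(j < k) ('X - (a j)%:P).

Definition blaschke_den k (a : 'I_k -> C) : {poly C} :=
  \prod_(j < k) (1 - (a j)^* *: 'X).

Lemma size_index_enum_ord k : size (index_enum 'I_k) = k.
Proof. by rewrite [index_enum _]unlock -enumT size_enum_ord. Qed.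

Lemma size_blaschke_num k (a : 'I_k -> C) : size (blaschke_num a) = k.+1.
Proof. by rewrite size_prod_XsubC size_index_enum_ord. Qed.

Lemma recip_blaschke_num k (a : 'I_k -> C) :
  recip k (blaschke_num a) = blaschke_den a.
Proof. by have := recip_prod_XsubC (index_enum 'I_k) a; rewrite size_index_enum_ord. Qed.

Lemma recip_blaschke_den k (a : 'I_k -> C) :
  recip k (blaschke_den a) = blaschke_num a.
Proof. by rewrite -recip_blaschke_num recipK ?size_blaschke_num. Qed.

Lemma size_blaschke_den k (a : 'I_k -> C) : (size (blaschke_den a) <= k.+1)%N.
Proof. by rewrite -recip_blaschke_num size_poly. Qed.

Lemma horner_blaschke_num k (a : 'I_k -> C) z :
  (blaschke_num a).[z] = \prod_(j < k) (z - a j).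
Proof. by rewrite horner_prod; apply: eq_bigr => j _; rewrite hornerXsubC. Qed.

Lemma horner_blaschke_den k (a : 'I_k -> C) z :
  (blaschke_den a).[z] = \prod_(j < k) (1 - (a j)^* * z).
Proof. by rewrite horner_prod; apply: eq_bigr => j _; rewrite !hornerE. Qed.

Section MobiusNumerator.
Variables (k : nat) (a : 'I_k -> C) (c t : C).
Hypotheses (c_norm1 : `|c| = 1) (a_le1 : forall j, `|a j| <= 1) (t_lt1 : `|t| < 1).

Let N := c *: blaschke_num a - t *: blaschke_den a.

Lemma size_mobius_num : size N = k.+1.
Proof.
have Nk : N`_k = c - t * ((blaschke_num a)`_0)^*.
  rewrite coefB !coefZ -recip_blaschke_num coef_poly ltnSn subnn.
  have := monic_prod_XsubC (index_enum 'I_k) xpredT a.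
  by rewrite qualifE /= lead_coefE size_blaschke_num => /eqP ->; rewrite mulr1.
have num0_le1 : `|(blaschke_num a)`_0| <= 1.
  rewrite -horner_coef0 horner_blaschke_num normr_prod prodr_ile1 // => j _.
  by rewrite sub0r normrN normr_ge0 a_le1.
have Nk_neq0 : N`_k != 0.
  rewrite Nk subr_eq0; apply/eqP => c_eq.
  have : `|c| < 1 by rewrite c_eq normrM norm_conjC (le_lt_trans _ t_lt1) // ler_piMr.
  by rewrite c_norm1 ltxx.
apply/anti_leq/andP; split; last by rewrite ltnNge; apply: contra Nk_neq0 => /leq_sizeP->.
apply: leq_trans (size_polyD _ _) _; rewrite geq_max size_polyN.
by rewrite !(leq_trans (size_scale_leq _ _)) ?size_blaschke_num ?size_blaschke_den.
Qed.

Lemma mobius_num_root_le1 z : root N z -> `|z| <= 1.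
Proof.
move=> /rootP; rewrite real_leNgt ?normr_real ?real1 // => N_z0; apply/negP => z_gt1.
have num_gt0 : 0 < `|(blaschke_num a).[z]|.
  rewrite horner_blaschke_num normr_prod prodr_gt0 // => j _.
  by rewrite (lt_le_trans _ (lerB_dist _ _)) // subr_gt0 (le_lt_trans (a_le1 j)).
have den_le_num : `|(blaschke_den a).[z]| <= `|(blaschke_num a).[z]|.
  rewrite horner_blaschke_num horner_blaschke_den !normr_prod ler_prod // => j _.
  by rewrite normr_ge0 norm_1subJM_le ?a_le1 ?ltW.
move: N_z0; rewrite /N hornerD hornerN !hornerZ => /eqP.
rewrite subr_eq0 => /eqP/(congr1 Num.norm).
rewrite !normrM c_norm1 mul1r => num_eq.
have : `|(blaschke_num a).[z]| < `|(blaschke_num a).[z]|.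
  rewrite {1}num_eq (le_lt_trans (ler_wpM2l (normr_ge0 t) den_le_num)) //.
  by rewrite -[X in _ < X]mul1r ltr_pM2r.
by rewrite ltxx.
Qed.

Lemma mobius_num_factor : exists (l : C) (b : 'I_k -> C),
  [/\ l != 0, forall j, `|b j| <= 1, N = l *: blaschke_num b &
      c^* *: blaschke_den a - t^* *: blaschke_num a = l^* *: blaschke_den b].
Proof.
have [r N_eq] := closed_field_poly_normal N.
set l := lead_coef N in N_eq.
have l_neq0 : l != 0 by rewrite lead_coef_eq0 -size_poly_eq0 size_mobius_num.
have size_r : size r = k.
  by have := size_mobius_num; rewrite N_eq size_scale // size_prod_XsubC => -[].
pose b (j : 'I_k) := r`_j.
have N_eqb : N = l *: blaschke_num b by rewrite {1}N_eq (big_nth 0) size_r big_mkord.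
exists l, b; split=> //.
  move=> j; apply: mobius_num_root_le1.
  by rewrite N_eq rootZ // root_prod_XsubC mem_nth ?size_r.
have := congr1 (recip k) N_eqb.
by rewrite recipB !recipZ recip_blaschke_den !recip_blaschke_num.
Qed.

End MobiusNumerator.
End BlaschkePoly.

Section HornerMxBlaschke.
Variables (C : numClosedFieldType) (n : nat) (Psi : 'M[C]_n.+1).
Hypothesis Psi_spec : forall l, eigenvalue Psi l -> `|l| < 1.
Local Notation hm := (horner_mx Psi).

Lemma unitmx_1subZ (k : C) : `|k| <= 1 -> 1 - k *: Psi \is a GRing.unit.
Proof.
move=> k_le1; rewrite unitmxE unitfE; apply/negP => /det0P[v v_neq0 v_ker].
have v_eq : v = k *: (v *m Psi).
  by apply/eqP; rewrite -subr_eq0 scalemxAr -{1}[v]mulmx1 -mulmxBr; apply/eqP.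
have k_neq0 : k != 0 by apply: contraNneq v_neq0 => k0; rewrite v_eq k0 scale0r.
have : eigenvalue Psi k^-1.
  by apply/eigenvalueP; exists v => //; rewrite {2}v_eq scalerA mulVf // scale1r.
move/Psi_spec; rewrite normfV invf_lt1 ?normr_gt0 // => /lt_geF.
by rewrite k_le1.
Qed.

Lemma unitmx_horner_prod k (Q : 'I_k -> {poly C}) :
  (forall j, hm (Q j) \is a GRing.unit) -> hm (\prod_(j < k) Q j) \is a GRing.unit.
Proof.
move=> Q_unit; rewrite rmorph_prod.
apply: (big_ind (fun A => A \in unitmx)) => [|A B A_unit B_unit|j _].
- exact: unitmx1.
- by rewrite unitmx_mul A_unit.
- exact: Q_unit.
Qed.

Lemma unitmx_horner_1subJX (a : C) :
  `|a| <= 1 -> hm (1 - a^* *: 'X) \is a GRing.unit.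
Proof.
by move=> a_le1; rewrite rmorphB rmorph1 /= horner_mxZ horner_mx_X unitmx_1subZ ?norm_conjC.
Qed.

Lemma unitmx_blaschke_den k (a : 'I_k -> C) :
  (forall j, `|a j| <= 1) -> hm (blaschke_den a) \is a GRing.unit.
Proof. by move=> a_le1; apply: unitmx_horner_prod => j; apply: unitmx_horner_1subJX. Qed.

Lemma horner_mx_prod_div k (P Q : 'I_k -> {poly C}) :
  (forall j, hm (Q j) \is a GRing.unit) ->
  \prod_(j < k) (hm (P j) / hm (Q j)) =
  hm (\prod_(j < k) P j) / hm (\prod_(j < k) Q j).
Proof.
elim: k P Q => [|k IHk] P Q Q_unit; first by rewrite !big_ord0 rmorph1 invr1 mulr1.
rewrite !big_ord_recl IHk // !rmorphM /=.
have hm_comm x y : GRing.comm (hm x) (hm y) by rewrite /GRing.comm -!rmorphM mulrC.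
set q := hm (Q ord0); set p' := hm (\prod_(i < k) _); set q' := hm (\prod_(i < k) _).
have q'_unit : q' \is a GRing.unit by apply: unitmx_horner_prod.
have comm_q : GRing.comm (p' / q') q^-1.
  by apply/commrV/commr_sym/commrM; [|apply/commrV]; apply: hm_comm.
by rewrite invrM ?Q_unit // -mulrA -comm_q !mulrA.
Qed.

End HornerMxBlaschke.

Section ComplexModulus.
Variable R : realType.
Local Notation C := R[i].

Lemma cabsE (z : C) : ((cabs z)%:C)%C = `|z|.
Proof. by rewrite normc_def; case: z. Qed.

Lemma cabs_lt1 (z : C) : (cabs z < 1) = (`|z| < 1).
Proof. by rewrite -cabsE -(ltcR _ 1). Qed.

Lemma cabs_le1 (z : C) : (cabs z <= 1) = (`|z| <= 1).
Proof. by rewrite -cabsE -(lecR _ 1). Qed.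

Lemma cabs_eq1 (z : C) : cabs z = 1 <-> `|z| = 1.
Proof. by rewrite -cabsE; split=> [->|/complexI]. Qed.

Lemma cabs_ge0 (z : C) : 0 <= cabs z.
Proof. by rewrite -ler0c cabsE. Qed.

Lemma cabs_eq0 (z : C) : cabs z = 0 -> z = 0.
Proof. exact: Normc.eq0_normc. Qed.

Lemma cabsM (y z : C) : cabs (y * z) = cabs y * cabs z.
Proof. by apply: complexI; rewrite rmorphM !cabsE normrM. Qed.

Lemma cabsR (x : R) : cabs ((x%:C)%C) = `|x|.
Proof. by rewrite /cabs /= expr0n addr0 sqrtr_sqr. Qed.

Lemma cabs_sum_le I (r : seq I) (F : I -> C) :
  cabs (\sum_(i <- r) F i) <= \sum_(i <- r) cabs (F i).
Proof.
by rewrite -lecR cabsE rmorph_sum (le_trans (ler_norm_sum _ _ _)).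
Qed.

Lemma real_complex_inj : injective (fun x : R => (x%:C)%C).
Proof. exact: complexI. Qed.

Lemma conjcR (x : R) : conjc ((x%:C)%C) = (x%:C)%C.
Proof. by rewrite /= oppr0. Qed.

Lemma sqr_cabs (z : C) : ((cabs z ^+ 2)%:C)%C = z * conjc z.
Proof. by rewrite rmorphXn /= cabsE normCK. Qed.

End ComplexModulus.

Section ComplexBlaschke.
Variable R : realType.
Local Notation C := R[i].

Lemma blaschke_paramsE k (c : C) (a : 'I_k -> C) :
  blaschke_params c a <-> `|c| = 1 /\ forall j, `|a j| <= 1.
Proof.
split=> -[c1 a_le1]; split=> [|j]; first exact/cabs_eq1.
- by rewrite -cabs_le1.
- exact/cabs_eq1.
- by rewrite cabs_le1.
Qed.

Variables (n : nat) (Psi : 'M[C]_n.+1).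
Hypothesis Psi_spec : forall l : C, eigenvalue Psi l -> cabs l < 1.
Local Notation hm := (horner_mx Psi).

Let Psi_spec_norm l : eigenvalue Psi l -> `|l| < 1.
Proof. by move/Psi_spec; rewrite cabs_lt1. Qed.

Lemma blaschke_factor_mxE (a : C) : `|a| <= 1 ->
  blaschke_factor_mx a Psi = hm ('X - a%:P) / hm (1 - a^* *: 'X).
Proof.
move=> a_le1; have Q_unit := unitmx_horner_1subJX Psi_spec_norm a_le1.
rewrite /blaschke_factor_mx; case: ifP => [/eqP a1|_]; last first.
  by rewrite !rmorphB /= horner_mxZ horner_mx_X horner_mx_C (rmorph1 hm).
have -> : 'X - a%:P = - a *: (1 - a^* *: 'X).
  rewrite scalerBr scalerA mulNr -normCK -cabsE a1 expr1n scaleN1r opprK.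
  by rewrite alg_polyC polyCN addrC.
by rewrite horner_mxZ -scalerAl mulrV // scalemx1.
Qed.

Lemma blaschke_mxE k (c : C) (a : 'I_k -> C) : (forall j, `|a j| <= 1) ->
  blaschke_mx c a Psi = c *: (hm (blaschke_num a) / hm (blaschke_den a)).
Proof.
move=> a_le1; rewrite /blaschke_mx (eq_bigr _ (fun j _ => blaschke_factor_mxE (a_le1 j))).
by rewrite horner_mx_prod_div // => j; apply: unitmx_horner_1subJX.
Qed.

Lemma blaschke_mx_mobius k (c : C) (a : 'I_k -> C) (t : C) :
  blaschke_params c a -> `|t| < 1 ->
  exists c' (b : 'I_k -> C), blaschke_params c' b /\
    blaschke_mx c' b Psi *m (1%:M - conjc t *: blaschke_mx c a Psi) =
    blaschke_mx c a Psi - t%:M.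
Proof.
move=> /blaschke_paramsE[c1 a_le1] t_lt1.
have [l [b [l_neq0 b_le1 num_eq den_eq]]] := mobius_num_factor c1 a_le1 t_lt1.
have c_neq0 : c != 0 by rewrite -normr_eq0 c1 oner_neq0.
have cl_neq0 : c * l^* != 0 by rewrite mulf_neq0 ?conjC_eq0.
exists (l / (c * l^*)), b; split.
  apply/blaschke_paramsE; split=> //.
  by rewrite normrM normfV normrM c1 norm_conjC mul1r divff ?normr_eq0.
rewrite !blaschke_mxE // mulmxE idmxE.
have Q_unit := unitmx_blaschke_den Psi_spec_norm a_le1.
have Q'_unit := unitmx_blaschke_den Psi_spec_norm b_le1.
move: num_eq den_eq => /(congr1 hm) num_eq /(congr1 hm).
rewrite !rmorphB /= !horner_mxZ in num_eq * => den_eq.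
set P := hm (blaschke_num a) in num_eq den_eq *.
set Q := hm (blaschke_den a) in num_eq den_eq Q_unit *.
set P' := hm (blaschke_num b) in num_eq *.
set Q' := hm (blaschke_den b) in den_eq Q'_unit *.
have -> : 1 - conjc t *: (c *: (P / Q)) = (c * l^*) *: (Q' / Q).
  rewrite -scalerA [l^* *: _]scalerAl -den_eq mulrBl -!scalerAl mulrV // scalerBr !scalerA.
  by rewrite -normCK c1 expr1n scale1r mulrC.
have -> : c *: (P / Q) - t%:M = l *: (P' / Q).
  by rewrite [l *: _]scalerAl -num_eq mulrBl -!scalerAl mulrV // scalemx1.
by rewrite -scalerAl -scalerAr scalerA divfK // mulrA divrK.
Qed.

End ComplexBlaschke.

Section InnerProduct.
Variables (R : realType) (n : nat).
Local Notation C := R[i].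
Implicit Types (x y z : 'cV[C]_n) (k : C).

Lemma cinnerBl x y z : cinner (x - y) z = cinner x z - cinner y z.
Proof. by rewrite /cinner -sumrB; apply: eq_bigr => i _; rewrite !mxE mulrBl. Qed.

Lemma cinnerBr x y z : cinner x (y - z) = cinner x y - cinner x z.
Proof. by rewrite /cinner -sumrB; apply: eq_bigr => i _; rewrite !mxE rmorphB mulrBr. Qed.

Lemma cinnerZl k x y : cinner (k *: x) y = k * cinner x y.
Proof. by rewrite /cinner mulr_sumr; apply: eq_bigr => i _; rewrite mxE mulrA. Qed.

Lemma cinnerZr k x y : cinner x (k *: y) = conjc k * cinner x y.
Proof.
by rewrite /cinner mulr_sumr; apply: eq_bigr => i _; rewrite mxE rmorphM mulrCA.
Qed.

Lemma cinnerC x y : cinner y x = conjc (cinner x y).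
Proof.
by rewrite /cinner rmorph_sum; apply: eq_bigr => i _; rewrite rmorphM /= conjcK mulrC.
Qed.

Lemma cinner_adjmx (A : 'M[C]_n) x y : cinner (A *m x) y = cinner x (adjmx A *m y).
Proof.
rewrite /cinner; under eq_bigr => i _ do rewrite mxE big_distrl /=.
rewrite exchange_big; apply: eq_bigr => j _ /=.
rewrite mxE rmorph_sum big_distrr; apply: eq_bigr => i _ /=.
by rewrite !mxE rmorphM /= conjcK mulrCA mulrA.
Qed.

Lemma sqr_vnorm x : vnorm x ^+ 2 = \sum_(i < n) cabs (x i 0) ^+ 2.
Proof. by rewrite sqr_sqrtr // sumr_ge0 // => i _; rewrite sqr_ge0. Qed.

Lemma cinnerxx x : cinner x x = ((vnorm x ^+ 2)%:C)%C.
Proof.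
by rewrite sqr_vnorm rmorph_sum; apply: eq_bigr => i _ /=; rewrite sqr_cabs.
Qed.

Lemma vnorm_ge0 x : 0 <= vnorm x.
Proof. exact: sqrtr_ge0. Qed.

Lemma vnorm_eq0 x : vnorm x = 0 -> x = 0.
Proof.
move=> /(congr1 (fun r => r ^+ 2)); rewrite sqr_vnorm expr0n /= => sum0.
have x0 := psumr_eq0P (fun i _ => sqr_ge0 (cabs (x i 0))) sum0.
apply/matrixP => i j; rewrite (ord1 j) mxE.
by apply: cabs_eq0; apply/eqP; rewrite -sqrf_eq0 x0.
Qed.

Lemma vnormZ k x : vnorm (k *: x) = cabs k * vnorm x.
Proof.
rewrite /vnorm; under eq_bigr do rewrite mxE cabsM exprMn.
by rewrite -mulr_sumr sqrtrM ?sqr_ge0 // sqrtr_sqr ger0_norm ?cabs_ge0.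
Qed.

Lemma cabs_le_vnorm x i : cabs (x i 0) <= vnorm x.
Proof.
rewrite -(ler_pXn2r (_ : 0 < 2)%N) ?nnegrE ?cabs_ge0 ?vnorm_ge0 //.
by rewrite sqr_vnorm (bigD1 i) //= lerDl sumr_ge0 // => j _; rewrite sqr_ge0.
Qed.

Lemma vnorm_mulmx_unit_le (A : 'M[C]_n) x : vnorm x = 1 ->
  vnorm (A *m x) <= Num.sqrt (\sum_(i < n) (\sum_(j < n) cabs (A i j)) ^+ 2).
Proof.
move=> x1; rewrite ler_sqrt ?sumr_ge0 // => [|i _]; last exact: sqr_ge0.
apply: ler_sum => i _; rewrite ler_pXn2r ?nnegrE ?cabs_ge0 ?sumr_ge0 // => [|j _].
  rewrite mxE (le_trans (cabs_sum_le _ _)) // ler_sum // => j _.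
  by rewrite cabsM ler_piMr ?cabs_ge0 // -x1 cabs_le_vnorm.
exact: cabs_ge0.
Qed.

Lemma mxnorm2_ubound (A : 'M[C]_n) :
  has_ubound [set vnorm (A *m x) | x in [set x : 'cV[C]_n | vnorm x = 1]].
Proof.
by exists (Num.sqrt (\sum_(i < n) (\sum_(j < n) cabs (A i j)) ^+ 2)) => _ [x /= x1 <-];
  apply: vnorm_mulmx_unit_le.
Qed.

Lemma mxnorm2_mulmx_le (A : 'M[C]_n) x : vnorm (A *m x) <= mxnorm2 A * vnorm x.
Proof.
have [x0|x_neq0] := eqVneq (vnorm x) 0.
  by rewrite x0 mulr0; move: (x0); rewrite (vnorm_eq0 x0) mulmx0 => ->.
have x_gt0 : 0 < vnorm x by rewrite lt_def x_neq0 vnorm_ge0.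
pose k := (((vnorm x)^-1)%:C)%C.
have cabs_k : cabs k = (vnorm x)^-1 by rewrite cabsR ger0_norm // invr_ge0 vnorm_ge0.
have kx1 : vnorm (k *: x) = 1 by rewrite vnormZ cabs_k mulVf.
have := ub_le_sup (mxnorm2_ubound A) (ex_intro2 _ _ (k *: x) kx1 erefl).
by rewrite -scalemxAr vnormZ cabs_k -ler_pdivrMr // mulrC.
Qed.

End InnerProduct.

Section MobiusGap.
Variables (R : realType) (n : nat).
Local Notation C := R[i].

Lemma vnorm_mobius_gap (M : 'M[C]_n) (v : 'cV[C]_n) (s e : R) :
  adjmx M *m M *m v = ((s ^+ 2)%:C)%C *: v ->
  let p := cinner (M *m v) v in let t := ((e%:C)%C * p) in
  vnorm ((M - t%:M) *m v) ^+ 2 - s ^+ 2 * vnorm ((1%:M - conjc t *: M) *m v) ^+ 2 =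
  e * cabs p ^+ 2 * (s ^+ 2 - 1) * (2 - e * vnorm v ^+ 2 * (s ^+ 2 + 1)).
Proof.
move=> eig p t; set u := M *m v.
have uu : cinner u u = ((s ^+ 2)%:C)%C * cinner v v.
  by rewrite /u cinner_adjmx mulmxA eig cinnerZr conjcR.
have vu : cinner v u = conjc p by rewrite cinnerC.
have tJ : conjc t = (e%:C)%C * conjc p by rewrite rmorphM /= oppr0.
have := cinnerxx v; have := sqr_cabs p.
set r := vnorm v ^+ 2; set q := cabs p ^+ 2; clearbody r q => pp vv.
have normA : vnorm ((M - t%:M) *m v) ^+ 2 = s ^+ 2 * r - 2 * e * q + e ^+ 2 * q * r.
  apply: real_complex_inj; rewrite /= -cinnerxx mulmxBl mul_scalar_mx -/u.
  rewrite !cinnerBl !cinnerBr !cinnerZl !cinnerZr uu vu -/p tJ /t vv.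
  by rewrite ?(rmorphD, rmorphN, rmorphB, rmorphM, rmorphXn, rmorph_nat) /= pp; ring.
have normB : vnorm ((1%:M - conjc t *: M) *m v) ^+ 2 =
    r - 2 * e * q + e ^+ 2 * q * s ^+ 2 * r.
  apply: real_complex_inj; rewrite /= -cinnerxx mulmxBl mul1mx -scalemxAl -/u.
  rewrite !cinnerBl !cinnerBr !cinnerZl !cinnerZr conjcK uu -/p vu tJ /t vv.
  by rewrite ?(rmorphD, rmorphN, rmorphB, rmorphM, rmorphXn, rmorph_nat) /= pp; ring.
by rewrite normA normB; ring.
Qed.

Lemma cinner_eq0_of_mobius_contraction (M : 'M[C]_n) (v : 'cV[C]_n) (s : R) :
  1 < s -> adjmx M *m M *m v = ((s ^+ 2)%:C)%C *: v ->
  (forall t : C, `|t| < 1 ->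
     exists2 Phi : 'M[C]_n, mxnorm2 Phi <= s & Phi *m (1%:M - conjc t *: M) = M - t%:M) ->
  cinner (M *m v) v = 0.
Proof.
move=> s_gt1 eig contraction.
set p := cinner (M *m v) v; set r := vnorm v ^+ 2; set q := cabs p.
have s_ge0 : 0 <= s by lra.
have r_ge0 : 0 <= r by rewrite sqr_ge0.
have q_ge0 : 0 <= q by apply: cabs_ge0.
(* [e] is chosen so that [|t| < 1] and [e * r * (s ^+ 2 + 1) < 1]. *)
pose K := (s ^+ 2 + 1) * (r + 1).
have K_ge1 : 1 <= K by rewrite /K; nra.
pose e := (K * (q + 1))^-1.
have e_gt0 : 0 < e by rewrite invr_gt0 mulr_gt0 // ?(lt_le_trans ltr01) //; lra.
have eKq : e * (K * (q + 1)) = 1 by rewrite mulVf // gt_eqF // -invr_gt0.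
pose t := ((e%:C)%C * p).
have t_lt1 : `|t| < 1.
  rewrite -cabs_lt1 cabsM cabsR gtr0_norm // -/q.
  have : e * (q + 1) <= 1.
    by rewrite -[X in _ <= X]eKq ler_pM2l // ler_peMl ?addr_ge0.
  lra.
have [Phi Phi_le Phi_eq] := contraction t t_lt1.
set w := (1%:M - conjc t *: M) *m v.
have gap_le0 : vnorm ((M - t%:M) *m v) ^+ 2 - s ^+ 2 * vnorm w ^+ 2 <= 0.
  rewrite subr_le0 -exprMn -Phi_eq -mulmxA.
  rewrite lerXn2r ?nnegrE ?vnorm_ge0 ?mulr_ge0 ?vnorm_ge0 //.
  apply: le_trans (mxnorm2_mulmx_le _ _) _.
  by rewrite ler_wpM2r ?vnorm_ge0.
have er_lt1 : e * r * (s ^+ 2 + 1) < 1.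
  have : e * K <= 1.
    by rewrite -[X in _ <= X]eKq ler_pM2l // ler_peMr ?(le_trans ler01) ?ler_wpDl.
  rewrite /K; nra.
set Z := e * (s ^+ 2 - 1) * (2 - e * r * (s ^+ 2 + 1)).
have Z_gt0 : 0 < Z by rewrite !mulr_gt0 // subr_gt0; [nra | lra].
have gapE : e * q ^+ 2 * (s ^+ 2 - 1) * (2 - e * r * (s ^+ 2 + 1)) = Z * q ^+ 2.
  by rewrite /Z; ring.
move: gap_le0; rewrite vnorm_mobius_gap // -/p -/r -/q gapE pmulr_rle0 // => q2_le0.
have q0 : q = 0 by nra.
exact: cabs_eq0.
Qed.

End MobiusGap.

Theorem theorem2 (R : realType) (n : nat) (Psi : 'M[R[i]]_n)
  (c : R[i]) (a : 'I_n.-1 -> R[i]) (v1 : 'cV[R[i]]_n) :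
  (forall lambda : R[i], eigenvalue Psi lambda -> cabs lambda < 1) ->
  blaschke_params c a ->
  (forall (c' : R[i]) (a' : 'I_n.-1 -> R[i]), blaschke_params c' a' ->
     mxnorm2 (blaschke_mx c' a' Psi) <= mxnorm2 (blaschke_mx c a Psi)) ->
  1 < mxnorm2 (blaschke_mx c a Psi) ->
  v1 != 0 ->
  adjmx (blaschke_mx c a Psi) *m blaschke_mx c a Psi *m v1
    = (((mxnorm2 (blaschke_mx c a Psi)) ^+ 2)%:C)%C *: v1 ->
  cinner (blaschke_mx c a Psi *m v1) v1 = 0.
Proof.
case: n Psi a v1 => [|n] Psi a v1 Psi_spec params maximal norm_gt1 _ singular.
  by rewrite /cinner big_ord0.
apply: cinner_eq0_of_mobius_contraction norm_gt1 singular _ => t t_lt1.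
have [c' [b [params' mobius]]] := blaschke_mx_mobius Psi_spec params t_lt1.
by exists (blaschke_mx c' b Psi); [exact: maximal | exact: mobius].
Qed.
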